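(* Let $\mathcal{X}$ be a finite set, $\phi\notin\mathcal{X}$ an extra symbol, and $L,T\in\mathbb{N}$. Fix a permutation of $\{0,\dots,L-1\}$ and let $i_0,\dots,i_{T-1}\in\{0,\dots,L-1\}$ be the positions obtained by cycling through this permutation in round-robin fashion. For $t=0,\dots,T-1$ let $\Pi_t$ be a probability distribution on $\mathcal{X}\cup\{\phi\}$. Let $X_0$ be a random element of $\mathcal{X}^L$ with an arbitrary distribution $P^*$, and let $Z_0,\dots,Z_{T-1}$ be independent random variables, independent of $X_0$, with $Z_t\sim\Pi_t$. Define the forward process $X_0,X_1,\dots,X_T$ by: $X_{t+1,j}=X_{t,j}$ for $j\neq i_t$; $X_{t+1,i_t}=X_{t,i_t}$ if $Z_t=\phi$; and $X_{t+1,i_t}=Z_t$ if $Z_t\in\mathcal{X}$. Suppose that the conditional distribution $\Pi_t(\cdot\mid\mathcal{X})$ equals a fixed distribution $\Pi(\cdot\mid\mathcal{X})$ on $\mathcal{X}$ for every $t$, and that there is $\epsilon>0$ with $\Pi_t(\phi)\le 1-\epsilon$ for all $t$. Then $$\mathsf{TV}\big(\mathsf{Law}(X_T),\,\Pi(\cdot\mid\mathcal{X})^{\otimes L}\big)\le L(1-\epsilon)^{\lfloor T/L\rfloor},$$ and in particular $\mathsf{Law}(X_T)$ converges to $\Pi(\cdot\mid\mathcal{X})^{\otimes L}$ in total variation as $T\to\infty$.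
   Context: $\mathsf{TV}$ denotes total variation distance. For a distribution $Q$ on a finite set $\mathcal{Y}$ and $A\subseteq\mathcal{Y}$ with $Q(A)>0$, $Q(\cdot\mid A)$ denotes the conditional distribution of $Q$ on $A$. $X_{t,j}$ denotes the $j$-th coordinate of $X_t\in\mathcal{X}^L$, coordinates indexed by $\{0,\dots,L-1\}$. *)

From HB Require Import structures.
From mathcomp Require Import all_boot all_order all_algebra all_fingroup.
From mathcomp Require Import all_classical all_reals topology normedtype sequences.
Set Implicit Arguments. Unset Strict Implicit. Unset Printing Implicit Defensive.
Import Order.TTheory GRing.Theory Num.Theory.
Local Open Scope ring_scope.

Section Defs.
Variable R : realType.

Definition is_dist (A : finType) (p : {ffun A -> R}) : Prop :=
  (forall a, 0 <= p a) /\ \sum_a p a = 1.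

Definition TV (A : finType) (p q : {ffun A -> R}) : R :=
  2^-1 * \sum_a `|p a - q a|.

Variable X : finType.
(* X ∪ {phi} is modelled by option X, with phi = None *)

Definition cond_on_X (p : {ffun option X -> R}) : {ffun X -> R} :=
  [ffun a => p (Some a) / \sum_b p (Some b)].

Variable L : nat.

Definition step (i : 'I_L) (z : option X) (x : {ffun 'I_L -> X}) : {ffun 'I_L -> X} :=
  match z with
  | None => x
  | Some a => [ffun j => if j == i then a else x j]
  end.

Fixpoint run (i : nat -> 'I_L) (z : nat -> option X) (x0 : {ffun 'I_L -> X}) (n : nat)
  : {ffun 'I_L -> X} :=
  match n with
  | 0 => x0
  | n.+1 => step (i n) (z n) (run i z x0 n)
  end.

Definition zext (T : nat) (z : {ffun 'I_T -> option X}) (t : nat) : option X :=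
  if (insub t : option 'I_T) is Some k then z k else None.

Definition lawXT (i : nat -> 'I_L) (Pstar : {ffun {ffun 'I_L -> X} -> R})
  (Pi : nat -> {ffun option X -> R}) (T : nat) : {ffun {ffun 'I_L -> X} -> R} :=
  [ffun x => \sum_(x0 : {ffun 'I_L -> X}) Pstar x0 *
     \sum_(z : {ffun 'I_T -> option X})
        (\prod_(t : 'I_T) Pi t (z t)) * (run i (zext z) x0 T == x)%:R].

Definition prod_dist (Q : {ffun X -> R}) : {ffun {ffun 'I_L -> X} -> R} :=
  [ffun x : {ffun 'I_L -> X} => \prod_(j : 'I_L) Q (x j)].

End Defs.

From HB Require Import structures.
From mathcomp Require Import all_boot all_order all_algebra all_fingroup.
From mathcomp Require Import all_classical all_reals topology normedtype sequences.
From mathcomp Require Import ring lra.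
Import Order.TTheory GRing.Theory Num.Theory numFieldNormedType.Exports.
Set Implicit Arguments. Unset Strict Implicit. Unset Printing Implicit Defensive.
Local Open Scope ring_scope.

(* Couple the chain started from Pstar with a copy started from the product
   law Q^{⊗L}, both driven by the same noise.  A refresh draws from Q and a
   [None] keeps the coordinate, so each step preserves Q^{⊗L}: the copy stays
   at Q^{⊗L} and the TV distance is at most the probability that the two
   chains differ at time T.  They can only differ at a coordinate j if every
   visit to j drew [None], which happens with probability at most
   (1 - eps)^(number of visits); the round robin visits j at least T / L
   times, and a union bound over j gives L (1 - eps)^(T / L). *)

Section FiniteSums.
Variable R : comPzSemiRingType.

Lemma sum_indicator (A : finType) (a : A) (F : A -> R) :
  \sum_x (a == x)%:R * F x = F a.
Proof.
rewrite (bigD1 a) //= eqxx mul1r big1 ?addr0 // => x.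
by rewrite eq_sym => /negbTE ->; rewrite mul0r.
Qed.

Lemma sum_mul_indicator (A : finType) (a : A) (F : A -> R) :
  \sum_x F x * (x == a)%:R = F a.
Proof. by under eq_bigr do rewrite mulrC eq_sym; exact: sum_indicator. Qed.

Lemma sum_option (A : finType) (F : option A -> R) :
  \sum_o F o = F None + \sum_a F (Some a).
Proof.
rewrite (bigD1 None) //=; congr (_ + _).
by rewrite (reindex_omap Some id) => [|[]] //; apply: eq_bigl => a; rewrite eqxx.
Qed.

Lemma exists_ffun_neq (I A : finType) (f g : {ffun I -> A}) :
  f != g -> exists j, f j != g j.
Proof.
move=> neq_fg; apply/existsP; rewrite -negb_forall.
by apply: contra neq_fg => /eqfunP eq_fg; apply/eqP/ffunP.
Qed.

Lemma indicator_ffun_eq (I A : finType) (f g : {ffun I -> A}) :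
  ((f == g)%:R : R) = \prod_j (f j == g j)%:R.
Proof.
have [->|/exists_ffun_neq[j neq_j]] := eqVneq f g.
  by rewrite big1 // => j _; rewrite eqxx.
by rewrite (bigD1 j) //= (negbTE neq_j) mul0r.
Qed.

Definition ffun_rcons (A : Type) n (z : {ffun 'I_n -> A}) (a : A) : {ffun 'I_n.+1 -> A} :=
  [ffun k : 'I_n.+1 => if (insub (val k) : option 'I_n) is Some k' then z k' else a].

Lemma sum_ffun_ord_recr (A : finType) n (F : {ffun 'I_n.+1 -> A} -> R) :
  \sum_z F z = \sum_(z : {ffun 'I_n -> A}) \sum_a F (ffun_rcons z a).
Proof.
rewrite pair_big /= (reindex (fun p => ffun_rcons p.1 p.2)) //=.
exists (fun z => ([ffun k => z (widen_ord (leqnSn n) k)], z ord_max)).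
- move=> [z a] _; congr pair; last by rewrite ffunE insubN //= ltnn.
  apply/ffunP => k; rewrite !ffunE insubT //= => lt_k.
  by congr (z _); apply: val_inj.
- move=> z _; apply/ffunP => k; rewrite !ffunE.
  case: insubP => [k' _ Ek | k_n] /=; rewrite ?ffunE; congr (z _).
    exact: val_inj.
  apply: val_inj => /=.
  by have := ltn_ord k; rewrite ltnS leq_eqVlt (negbTE k_n) orbF => /eqP.
Qed.

End FiniteSums.

Lemma sum_triple (R : nmodType) (I J K : finType) (F : I * J * K -> R) :
  \sum_k F k = \sum_i \sum_j \sum_k F (i, j, k).
Proof. by rewrite [RHS]pair_bigA [RHS]pair_big; apply: eq_bigr => -[[]]. Qed.

Lemma sum_triple_mul (R : comPzSemiRingType) (I J K : finType)
    (a : I -> R) (b : J -> R) (c : K -> R) :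
  \sum_(k : I * J * K) a k.1.1 * b k.1.2 * c k.2 =
  (\sum_i a i) * (\sum_j b j) * (\sum_k c k).
Proof.
rewrite sum_triple -mulrA big_distrl /=; apply: eq_bigr => i _.
rewrite big_distrl big_distrr /=; apply: eq_bigr => j _.
by rewrite mulrA big_distrr.
Qed.

Section TotalVariation.
Variable R : realType.

Lemma TV_ge0 (A : finType) (p q : {ffun A -> R}) : 0 <= TV p q.
Proof. by rewrite mulr_ge0 ?invr_ge0 ?ler0n ?sumr_ge0. Qed.

Definition pushforward (I A : finType) (c : I -> R) (r : I -> A) : {ffun A -> R} :=
  [ffun x => \sum_k c k * (r k == x)%:R].

Lemma sum_abs_indicator_sub (A : finType) (a b : A) :
  \sum_x `|(a == x)%:R - (b == x)%:R : R| = 2 * (a != b)%:R.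
Proof.
have [->|neq_ab] := eqVneq a b.
  by rewrite mulr0 big1 // => x _; rewrite subrr normr0.
have -> : 2 = \sum_x ((a == x)%:R * 1 + (b == x)%:R * 1) :> R.
  by rewrite big_split /= !sum_indicator.
rewrite mulr1; apply: eq_bigr => x _; rewrite !mulr1.
have [<-|neq_ax] := eqVneq a x; first by rewrite eq_sym (negbTE neq_ab) subr0 normr1 addr0.
by case: (b == x); rewrite /= ?sub0r ?subr0 ?normrN ?normr1 ?normr0 ?add0r ?addr0.
Qed.

Lemma TV_pushforward_le (I A : finType) (c : I -> R) (r1 r2 : I -> A) :
  (forall k, 0 <= c k) ->
  TV (pushforward c r1) (pushforward c r2) <= \sum_k c k * (r1 k != r2 k)%:R.
Proof.
move=> c_ge0.
have -> : \sum_k c k * (r1 k != r2 k)%:R =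
    2^-1 * \sum_k c k * \sum_x `|(r1 k == x)%:R - (r2 k == x)%:R|.
  rewrite big_distrr; apply: eq_bigr => k _.
  by rewrite sum_abs_indicator_sub /= mulrCA mulKf // pnatr_eq0.
rewrite /TV ler_wpM2l ?invr_ge0 ?ler0n //.
under [leRHS]eq_bigr do rewrite big_distrr /=.
rewrite exchange_big /=; apply: ler_sum => x _; rewrite !ffunE -sumrB.
apply: le_trans (ler_norm_sum _ _ _) _; apply: ler_sum => k _.
by rewrite -mulrBr normrM ger0_norm.
Qed.

End TotalVariation.

Section ForwardProcess.
Variables (R : realType) (X : finType) (L : nat).
Implicit Types (i : nat -> 'I_L) (Pi : nat -> {ffun option X -> R}).
Local Notation state := {ffun 'I_L -> X}.
Local Notation noise T := {ffun 'I_T -> option X}.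
Local Notation law := {ffun state -> R}.

Lemma run_ext i z1 z2 (x0 : state) n :
  (forall t, (t < n)%N -> z1 t = z2 t) -> run i z1 x0 n = run i z2 x0 n.
Proof. by elim: n => //= n IH eq_z; rewrite eq_z // IH // => t /ltnW; apply: eq_z. Qed.

Lemma zext_ord T (z : noise T) (t : 'I_T) : zext z t = z t.
Proof. by rewrite /zext valK. Qed.

Lemma zext_rcons_lt T (z : noise T) a t :
  (t < T)%N -> zext (ffun_rcons z a) t = zext z t.
Proof.
move=> lt_tT; rewrite /zext.
case: insubP => [k _ Ek|]; last by rewrite ltnW.
case: insubP => [k' _ Ek'|]; last by rewrite lt_tT.
rewrite ffunE; case: insubP => [k'' _ Ek''|]; last by rewrite Ek lt_tT.
by congr (z _); apply: val_inj; rewrite Ek'' Ek Ek'.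
Qed.

Lemma zext_rcons_last T (z : noise T) a : zext (ffun_rcons z a) T = a.
Proof.
rewrite /zext; case: insubP => [k _ Ek|]; last by rewrite ltnSn.
by rewrite ffunE Ek insubN // ltnn.
Qed.

Lemma run_rcons i T (z : noise T) a (x0 : state) :
  run i (zext (ffun_rcons z a)) x0 T.+1 = step (i T) a (run i (zext z) x0 T).
Proof.
by rewrite /= zext_rcons_last; congr step; apply: run_ext => t; apply: zext_rcons_lt.
Qed.

Definition noise_weight Pi T (z : noise T) : R := \prod_(t : 'I_T) Pi t (z t).

Lemma noise_weight_rcons Pi T (z : noise T) a :
  noise_weight Pi (ffun_rcons z a) = noise_weight Pi z * Pi T a.
Proof.
rewrite /noise_weight big_ord_recr /= ffunE insubN ?ltnn //.
by congr (_ * _); apply: eq_bigr => t _; rewrite ffunE /= valK.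
Qed.

Lemma lawXTE i (P : law) Pi T x :
  lawXT i P Pi T x =
  \sum_x0 \sum_(z : noise T) P x0 * noise_weight Pi z * (run i (zext z) x0 T == x)%:R.
Proof.
rewrite ffunE; apply: eq_bigr => x0 _; rewrite big_distrr.
by apply: eq_bigr => z _; rewrite /= mulrA.
Qed.

Lemma lawXT0 i (P : law) Pi : lawXT i P Pi 0 = P.
Proof.
have sum_noise0 (F : noise 0 -> R) : \sum_z F z = F [ffun=> None].
  by rewrite (big_pred1 [ffun=> None]) // => z; symmetry; apply/eqP/ffunP => -[].
apply/ffunP => x; rewrite lawXTE.
under eq_bigr do rewrite sum_noise0 /noise_weight big_ord0 mulr1 /=.
exact: sum_mul_indicator.
Qed.

Definition step_kernel (k : 'I_L) (p : {ffun option X -> R}) (mu : law) : law :=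
  [ffun x => \sum_y mu y * \sum_a p a * (step k a y == x)%:R].

Lemma lawXTS i (P : law) Pi T :
  lawXT i P Pi T.+1 = step_kernel (i T) (Pi T) (lawXT i P Pi T).
Proof.
apply/ffunP => x; rewrite lawXTE ffunE.
under [RHS]eq_bigr do rewrite lawXTE big_distrl /=.
rewrite [RHS]exchange_big; apply: eq_bigr => x0 _ /=.
under [RHS]eq_bigr do rewrite big_distrl /=.
rewrite [RHS]exchange_big sum_ffun_ord_recr; apply: eq_bigr => z _ /=.
under [RHS]eq_bigr do rewrite -mulrA.
rewrite -big_distrr sum_indicator big_distrr; apply: eq_bigr => a _ /=.
by rewrite noise_weight_rcons -run_rcons !mulrA.
Qed.

Lemma cond_on_X_SomeE (p : {ffun option X -> R}) (Q : {ffun X -> R}) :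
  is_dist p -> cond_on_X p = Q -> is_dist Q -> forall b, p (Some b) = Q b * (1 - p None).
Proof.
move=> [_ p1] <- [_ Q1] b; set S := \sum_c p (Some c).
have -> : 1 - p None = S by rewrite -p1 sum_option -/S; ring.
have S_neq0 : S != 0.
  (* S = 0 would force Q = 0, since x / 0 = 0 *)
  apply/eqP => S0; move/eqP: Q1; apply/negP.
  rewrite big1 1?eq_sym ?oner_eq0 // => c _.
  by rewrite ffunE -/S S0 invr0 mulr0.
by rewrite ffunE -/S divfK.
Qed.

Lemma prod_dist_update (Q : {ffun X -> R}) (k : 'I_L) b (x : state) :
  \sum_c Q c = 1 ->
  \sum_y prod_dist L Q y * ([ffun j => if j == k then b else y j] == x)%:R =
  (b == x k)%:R * \prod_(j | j != k) Q (x j).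
Proof.
move=> Q1; pose F j c := Q c * ((if j == k then b else c) == x j)%:R.
transitivity (\sum_(y : state) \prod_j F j (y j)).
  apply: eq_bigr => y _; rewrite ffunE indicator_ffun_eq -big_split /=.
  by apply: eq_bigr => j _; rewrite ffunE.
rewrite -(bigA_distr_bigA F) (bigD1 k) //= /F eqxx -big_distrl /= Q1 mul1r.
congr (_ * _); apply: eq_bigr => j /negbTE ->.
exact: sum_mul_indicator.
Qed.

Lemma step_kernel_prod_dist (k : 'I_L) (p : {ffun option X -> R}) (Q : {ffun X -> R}) :
  is_dist p -> cond_on_X p = Q -> is_dist Q ->
  step_kernel k p (prod_dist L Q) = prod_dist L Q.
Proof.
move=> p_dist pQ Q_dist; have pS := cond_on_X_SomeE p_dist pQ Q_dist.
apply/ffunP => x; rewrite ffunE.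
under eq_bigr do rewrite big_distrr /=.
rewrite exchange_big sum_option /=.
under eq_bigr do rewrite mulrCA.
under [X in _ + X]eq_bigr do under eq_bigr do rewrite mulrCA.
under [X in _ + X]eq_bigr do rewrite -big_distrr prod_dist_update ?Q_dist.2 //= mulrCA.
rewrite -big_distrr /= sum_mul_indicator.
under eq_bigr do rewrite eq_sym.
by rewrite sum_indicator pS ffunE (bigD1 k) //=; ring.
Qed.

Lemma prod_dist_ge0 (Q : {ffun X -> R}) : is_dist Q -> forall x, 0 <= prod_dist L Q x.
Proof. by move=> [Q_ge0 _] x; rewrite ffunE prodr_ge0. Qed.

Lemma prod_dist_sum (Q : {ffun X -> R}) : is_dist Q -> \sum_x prod_dist L Q x = 1.
Proof.
move=> [_ Q1]; under eq_bigr do rewrite ffunE.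
by rewrite -(bigA_distr_bigA (fun _ c => Q c)) big1.
Qed.

Lemma lawXT_prod_dist i Pi (Q : {ffun X -> R}) T : is_dist Q ->
  (forall t, (t < T)%N -> is_dist (Pi t) /\ cond_on_X (Pi t) = Q) ->
  lawXT i (prod_dist L Q) Pi T = prod_dist L Q.
Proof.
move=> Q_dist; elim: T => [|T IH] PiQ; first exact: lawXT0.
have [Pi_dist PiQT] := PiQ T (ltnSn T).
by rewrite lawXTS IH ?step_kernel_prod_dist // => t /ltnW; apply: PiQ.
Qed.

Definition coupling_weight (P mu : law) Pi T (k : state * state * noise T) : R :=
  P k.1.1 * mu k.1.2 * noise_weight Pi k.2.

Lemma pushforward_coupling_l i (P mu : law) Pi T : \sum_y mu y = 1 ->
  pushforward (@coupling_weight P mu Pi T)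
    (fun k : state * state * noise T => run i (zext k.2) k.1.1 T) =
  lawXT i P Pi T.
Proof.
move=> mu1; apply/ffunP => x; rewrite ffunE lawXTE sum_triple.
apply: eq_bigr => x0 _; transitivity (\sum_y mu y *
  \sum_(z : noise T) P x0 * noise_weight Pi z * (run i (zext z) x0 T == x)%:R).
  apply: eq_bigr => y _; rewrite big_distrr.
  by apply: eq_bigr => z _; rewrite /= /coupling_weight; ring.
by rewrite -big_distrl /= mu1 mul1r.
Qed.

Lemma pushforward_coupling_r i (P mu : law) Pi T : \sum_x P x = 1 ->
  pushforward (@coupling_weight P mu Pi T)
    (fun k : state * state * noise T => run i (zext k.2) k.1.2 T) =
  lawXT i mu Pi T.
Proof.
move=> P1; apply/ffunP => y; rewrite ffunE lawXTE sum_triple exchange_big.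
apply: eq_bigr => y0 _; transitivity (\sum_x P x *
  \sum_(z : noise T) mu y0 * noise_weight Pi z * (run i (zext z) y0 T == y)%:R).
  apply: eq_bigr => x _; rewrite big_distrr.
  by apply: eq_bigr => z _; rewrite /= /coupling_weight; ring.
by rewrite -big_distrl /= P1 mul1r.
Qed.

Definition never_updated i T (j : 'I_L) (z : noise T) : R :=
  \prod_(t : 'I_T) (if i t == j then (z t == None)%:R else 1).

Lemma run_neq_noise_None i zz (x0 y0 : state) n j :
  run i zz x0 n j != run i zz y0 n j -> forall t, (t < n)%N -> i t = j -> zz t = None.
Proof.
elim: n => [|n IH] /= neq_j t //; rewrite ltnS leq_eqVlt => /orP[/eqP-> itj | lt_tn itj].
  by move: neq_j; case: (zz n) => // a; rewrite !ffunE itj !eqxx.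
apply: IH lt_tn itj; move: neq_j; case: (zz n) => // a; rewrite !ffunE.
by case: ifP => // _; rewrite eqxx.
Qed.

Lemma run_neq_le_never_updated i T (z : noise T) (x0 y0 : state) :
  ((run i (zext z) x0 T != run i (zext z) y0 T)%:R : R) <= \sum_j never_updated i j z.
Proof.
have nu_ge0 j : 0 <= never_updated i j z by apply: prodr_ge0 => t _; case: ifP.
have [_|/exists_ffun_neq[j neq_j]] := eqVneq; first by rewrite sumr_ge0.
rewrite (bigD1 j) //=.
have -> : never_updated i j z = 1.
  apply: big1 => t _; case: eqP => // itj.
  by have := run_neq_noise_None neq_j (ltn_ord t) itj; rewrite zext_ord => ->.
by rewrite lerDl sumr_ge0.
Qed.

Lemma sum_noise_weight_never_updated i Pi T j :
  (forall t, (t < T)%N -> \sum_a Pi t a = 1) ->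
  \sum_(z : noise T) noise_weight Pi z * never_updated i j z =
  \prod_(t : 'I_T) (if i t == j then Pi t None else 1).
Proof.
move=> Pi1; under eq_bigr do rewrite -big_split /=.
pose F (t : 'I_T) a := Pi t a * (if i t == j then (a == None)%:R else 1).
rewrite -(bigA_distr_bigA F) /F.
apply: eq_bigr => t _; case: ifP => _; first exact: sum_mul_indicator.
by under eq_bigr do rewrite mulr1; apply: Pi1.
Qed.

Lemma TV_lawXT_le i (P : law) Pi (Q : {ffun X -> R}) T :
  is_dist P -> is_dist Q ->
  (forall t, (t < T)%N -> is_dist (Pi t) /\ cond_on_X (Pi t) = Q) ->
  TV (lawXT i P Pi T) (prod_dist L Q) <=
  \sum_j \prod_(t : 'I_T) (if i t == j then Pi t None else 1).
Proof.
move=> [P_ge0 P1] Q_dist PiQ.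
have pi1 := prod_dist_sum Q_dist.
have w_ge0 (z : noise T) : 0 <= noise_weight Pi z.
  by apply: prodr_ge0 => t _; have [[Pi_ge0 _] _] := PiQ t (ltn_ord t).
set c := @coupling_weight P (prod_dist L Q) Pi T.
have c_ge0 k : 0 <= c k by rewrite !mulr_ge0 ?P_ge0 ?w_ge0 ?prod_dist_ge0.
rewrite -(pushforward_coupling_l i P Pi T pi1) -{2}(lawXT_prod_dist i Q_dist PiQ).
rewrite -(pushforward_coupling_r i (prod_dist L Q) Pi T P1).
apply: le_trans (TV_pushforward_le _ _ c_ge0) _.
apply: le_trans (_ : \sum_k c k * \sum_j never_updated i j k.2 <= _).
  by apply: ler_sum => k _; rewrite ler_wpM2l ?run_neq_le_never_updated.
under eq_bigr do rewrite big_distrr /=.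
rewrite exchange_big /= ler_sum // => j _.
under eq_bigr do rewrite -mulrA.
pose nu (z : noise T) := noise_weight Pi z * never_updated i j z.
rewrite (sum_triple_mul P (prod_dist L Q) nu) /nu.
by rewrite P1 pi1 !mul1r sum_noise_weight_never_updated // => t /PiQ[[_ ->]].
Qed.

End ForwardProcess.

Lemma prod_le_exprn (R : numDomainType) (I : finType) (f : I -> R) (A : {pred I}) q n :
  q <= 1 -> (n <= #|A|)%N -> (forall k, 0 <= f k <= 1) ->
  (forall k, k \in A -> f k <= q) -> \prod_k f k <= q ^+ n.
Proof.
move=> q_le1 n_le_A f01 f_le_q; have f_ge0 k : 0 <= f k by case/andP: (f01 k).
apply: (@le_trans _ _ (q ^+ #|A|)).
  rewrite (bigID (mem A)) /= -prodr_const.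
  apply: le_trans (_ : \prod_(k in A) f k * 1 <= _).
    by rewrite ler_wpM2l ?prodr_ge0 ?prodr_ile1.
  by rewrite mulr1 ler_prod // => k kA; rewrite f_ge0 f_le_q.
have [A0|/card_gt0P[k kA]] := posnP #|A|.
  by move: n_le_A; rewrite A0 leqn0 => /eqP->.
by rewrite ler_wiXn2l // (le_trans (f_ge0 k)) ?f_le_q.
Qed.

Lemma round_robin_card L (sigma : {perm 'I_L}) (i : nat -> 'I_L)
    (hi : forall (t : nat) (k : 'I_L), val k = (t %% L)%N -> i t = sigma k) T j :
  (T %/ L <= #|[pred t : 'I_T | i t == j]|)%N.
Proof.
have L_gt0 : (0 < L)%N := leq_ltn_trans (leq0n _) (ltn_ord j).
set k := (sigma^-1)%g j.
have visit_lt_T (m : 'I_(T %/ L)) : (m * L + k < T)%N.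
  apply: leq_trans (leq_divM T L); apply: (@leq_trans (m.+1 * L)).
    by rewrite mulSnr ltn_add2l.
  by rewrite leq_mul2r ltn_ord orbT.
pose visit m := Ordinal (visit_lt_T m).
have visit_inj : injective visit.
  move=> m1 m2 /(congr1 val) /= /addIn /eqP; rewrite eqn_pmul2r // => /eqP.
  exact: val_inj.
rewrite -{1}[(T %/ L)%N]card_ord -cardsT -(card_imset _ visit_inj).
apply: subset_leq_card; apply/fintype.subsetP => _ /imsetP[m _ ->].
by rewrite inE (hi _ k) ?permKV //= modnMDl modn_small.
Qed.

Local Open Scope classical_set_scope.

Lemma cvg_exprn_div (R : realType) (q : R) L :
  (0 < L)%N -> `|q| < 1 -> (fun T => q ^+ (T %/ L)) @ \oo --> (0 : R).
Proof.
move=> L_gt0 q_lt1; apply: cvg_comp (cvg_expr q_lt1).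
apply/cvgnyPge => m; exists (m * L)%N => // T /= le_mL_T.
by rewrite -(mulnK m L_gt0) leq_div2r.
Qed.

Theorem lemma1 (R : realType) (X : finType) (L : nat) (sigma : {perm 'I_L})
  (i : nat -> 'I_L)
  (hi : forall (t : nat) (k : 'I_L), val k = (t %% L)%N -> i t = sigma k)
  (Pstar : {ffun {ffun 'I_L -> X} -> R}) (hPstar : is_dist Pstar)
  (Pi : nat -> {ffun option X -> R}) (Q : {ffun X -> R}) (hQ : is_dist Q)
  (eps : R) (heps : 0 < eps) :
  (forall T : nat,
     (forall t : nat, (t < T)%N ->
        [/\ is_dist (Pi t), cond_on_X (Pi t) = Q & Pi t None <= 1 - eps]) ->
     TV (lawXT i Pstar Pi T) (prod_dist L Q) <= L%:R * (1 - eps) ^+ (T %/ L))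
  /\
  ((forall t : nat,
      [/\ is_dist (Pi t), cond_on_X (Pi t) = Q & Pi t None <= 1 - eps]) ->
   (fun T : nat => TV (lawXT i Pstar Pi T) (prod_dist L Q)) @ \oo --> (0 : R)).
Proof.
have L_gt0 : (0 < L)%N := leq_ltn_trans (leq0n _) (ltn_ord (i 0)).
have q_le1 : 1 - eps <= 1 by lra.
have TV_le T : (forall t, (t < T)%N ->
    [/\ is_dist (Pi t), cond_on_X (Pi t) = Q & Pi t None <= 1 - eps]) ->
    TV (lawXT i Pstar Pi T) (prod_dist L Q) <= L%:R * (1 - eps) ^+ (T %/ L).
  move=> PiT; apply: le_trans (TV_lawXT_le i hPstar hQ _) _ => [t /PiT[]//|].
  rewrite -[L in L%:R](card_ord L) mulr_natl -sumr_const; apply: ler_sum => j _.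
  apply: (prod_le_exprn (A := [pred t : 'I_T | i t == j])) => //.
  - exact: round_robin_card hi T j.
  - move=> t; have [[Pi_ge0 _] _ le_q] := PiT t (ltn_ord t).
    by case: ifP; rewrite ?lexx ?ler01 // Pi_ge0 (le_trans le_q).
  - by move=> t /eqP ->; rewrite eqxx; case: (PiT t (ltn_ord t)).
split=> // Pi_all.
have q_ge0 : 0 <= 1 - eps.
  by case: (Pi_all 0) => -[Pi_ge0 _] _; exact: le_trans (Pi_ge0 None).
have q_lt1 : `|1 - eps| < 1 by rewrite ger0_norm // ltrBlDr ltrDl.
have bound_cvg0 : (fun T => L%:R * (1 - eps) ^+ (T %/ L)) @ \oo --> (0 : R).
  by rewrite -(mulr0 (L%:R : R)); apply: cvgMl_tmp; exact: cvg_exprn_div.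
apply: (squeeze_cvgr _ (cvg_cst 0) bound_cvg0).
by apply: nearW => T; rewrite TV_ge0 TV_le // => t _; apply: Pi_all.
Qed.
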